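(* Let $G$ be a connected graph with $\delta(G)=1$, girth at least $15$, and $G\in\mathcal U$. If $s_1$ and $s_2$ are single star support vertices of $G$, then $d_G(s_1,s_2)\neq 3$.
   Context: All graphs are finite and simple. A set $P\subseteq V(G)$ is an open packing if no two distinct vertices of $P$ have a common neighbor; it is maximal if maximal under inclusion among open packings. $\rho^o(G)$ is the maximum size of an open packing and $\rho^o_L(G)$ the minimum size of a maximal open packing; $\mathcal U$ is the class of graphs with $\rho^o_L(G)=\rho^o(G)$. A leaf is a vertex of degree $1$; a support vertex is a vertex adjacent to at least one leaf; $S_G$ is the set of support vertices. A single star support vertex is a support vertex not adjacent to any other support vertex; a double star support vertex is a support vertex adjacent to another support vertex. *)

From mathcomp Require Import all_boot.
Set Implicit Arguments. Unset Strict Implicit. Unset Printing Implicit Defensive.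

Definition simple_graph (T : finType) (e : rel T) : Prop :=
  symmetric e /\ irreflexive e.

Section Graph.
Variables (T : finType) (e : rel T).

Definition nbhd (v : T) : {set T} := [set w | e v w].
Definition deg (v : T) : nat := #|nbhd v|.

Definition min_degree_is (m : nat) : Prop :=
  (exists v : T, deg v = m) /\ (forall v : T, m <= deg v).

Definition connected_graph : Prop := forall u v : T, connect e u v.

Definition walk_len (u v : T) (k : nat) : Prop :=
  exists p : seq T, [/\ path e u p, last u p = v & size p = k].

Definition dist_is (u v : T) (k : nat) : Prop :=
  walk_len u v k /\ (forall j, j < k -> ~ walk_len u v j).

Definition is_cycle (c : seq T) : Prop :=
  [/\ 3 <= size c, uniq c & cycle e c].

(* girth at least g: no cycle of length < g (acyclic graphs have infinite girth) *)
Definition girth_at_least (g : nat) : Prop :=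
  forall c : seq T, is_cycle c -> g <= size c.

Definition open_packing (P : {set T}) : Prop :=
  forall u v, u \in P -> v \in P -> u != v -> forall w, ~~ (e u w && e v w).

Definition maximal_open_packing (P : {set T}) : Prop :=
  open_packing P /\ forall Q : {set T}, open_packing Q -> P \subset Q -> P = Q.

Definition open_packing_number (n : nat) : Prop :=
  (exists P, open_packing P /\ #|P| = n) /\
  (forall P, open_packing P -> #|P| <= n).

Definition lower_open_packing_number (n : nat) : Prop :=
  (exists P, maximal_open_packing P /\ #|P| = n) /\
  (forall P, maximal_open_packing P -> n <= #|P|).

Definition in_U : Prop :=
  exists n, open_packing_number n /\ lower_open_packing_number n.

Definition leaf (v : T) : bool := deg v == 1.
Definition support (v : T) : bool := [exists w, e v w && leaf w].
Definition single_star_support (v : T) : bool :=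
  support v && [forall w, e v w ==> ~~ support w].

End Graph.

(* Three general facts are developed first.
   - Girth: a closed non-backtracking walk of positive length is at least as
     long as the girth, hence two non-backtracking walks with common ends and
     total length below the girth coincide (short_paths_unique).
   - Exchange lemma for graphs in U: if S and P' are open packings and every
     vertex reached from P' by a walk of length 2 is so reached from S, then
     |P'| <= |S| (open_packing_exchange); consequently two distinct
     non-adjacent support vertices s, t have no common neighbour x such that
     x and s have no common neighbour (support_pair_common_nbr).
   - For a shortest path s1 a b s2 and a leaf l2 at s2, every walk s1 x y with
     x != a extends to a non-backtracking walk s1 x y z w, with w chosen
     canonically from (y, z); the set W of such "far ends" w satisfies:
     {b} u W and {s1, l2} u W are open packings, the latter covered by the
     former, by uniqueness of short walks from s1.
   Since |{b} u W| < |{s1, l2} u W|, the exchange lemma gives the theorem. *)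

From Pilot Require Import Defs.
From mathcomp Require Import all_boot zify.
Set Implicit Arguments. Unset Strict Implicit. Unset Printing Implicit Defensive.

Section Girth.
Variables (T : finType) (e : rel T) (g : nat).
Hypothesis e_sym : symmetric e.
Hypothesis e_irr : irreflexive e.
Hypothesis girth_g : girth_at_least e g.

(* A closed non-backtracking walk f 0, ..., f k of positive length has length
   at least g: its shortest closed sub-walk is a cycle. *)
Lemma closed_walk_long (f : nat -> T) (k : nat) :
  (forall i, i < k -> e (f i) (f i.+1)) ->
  (forall i, i.+2 <= k -> f i != f i.+2) ->
  f 0 = f k -> 0 < k -> g <= k.
Proof.
move=> walk_f nb_f closed k_gt0.
have ex_ret : exists d, (0 < d) &&
    [exists i : 'I_k.+1, (i + d <= k) && (f i == f (i + d))].
  exists k; rewrite k_gt0; apply/existsP; exists ord0.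
  by rewrite /= add0n leqnn closed eqxx.
case: (ex_minnP ex_ret) => d /andP[d_gt0 /existsP[i /andP[idk /eqP f_ret]]] d_min.
pose h m := f (i + m).
pose c := map h (iota 0 d).
have d_ge3 : 3 <= d.
  case: d d_gt0 idk f_ret d_min {h c} => [|[|[|d]]] //= _ idk f_ret _.
  - rewrite addn1 in idk f_ret; have := walk_f i idk.
    by rewrite -f_ret e_irr.
  - rewrite addn2 in idk f_ret; have := nb_f i idk.
    by rewrite f_ret eqxx.
have h_inj : forall m1 m2, m1 < m2 -> m2 < d -> h m1 != h m2.
  move=> m1 m2 lt12 m2d; apply/eqP => eq12.
  suff : d <= m2 - m1 by lia.
  apply: d_min; rewrite subn_gt0 lt12; apply/existsP.
  have ik : i + m1 < k.+1 by lia.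
  exists (Ordinal ik); rewrite /= -/(h m1) eq12.
  have -> : i + m1 + (m2 - m1) = i + m2 by lia.
  by rewrite eqxx; lia.
have c_cycle : is_cycle e c.
  split; first by rewrite size_map size_iota.
  - rewrite map_inj_in_uniq ?iota_uniq // => m1 m2.
    rewrite !mem_iota /= !add0n => m1d m2d /eqP eq12; apply/eqP.
    case: (ltngtP m1 m2) => // lt12.
    + by rewrite (negbTE (h_inj _ _ lt12 m2d)) in eq12.
    + by rewrite eq_sym (negbTE (h_inj _ _ lt12 m1d)) in eq12.
  - rewrite (cycle_path (f 0)); apply/(pathP (f 0)) => j.
    rewrite size_map size_iota => jd.
    rewrite (nth_map 0) ?size_iota // nth_iota // add0n.
    case: j jd => [|j] jd /=.
      rewrite -(nth_last (f 0)) size_map size_iota (nth_map 0) ?size_iota; last by lia.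
      rewrite nth_iota; last by lia.
      rewrite /h add0n addn0 f_ret.
      have -> : i + d = (i + d.-1).+1 by lia.
      by apply: walk_f; lia.
    rewrite (nth_map 0) ?size_iota; last by lia.
    rewrite nth_iota; last by lia.
    by rewrite /h add0n addnS; apply: walk_f; lia.
have := girth_g c_cycle; rewrite size_map size_iota; lia.
Qed.

(* Two non-backtracking walks f 0..f k and h 0..h l with common ends and total
   length below g coincide: otherwise, splicing them at their last difference
   gives a short closed non-backtracking walk.  (Induction on N >= k + l.) *)
Lemma short_walks_unique (N : nat) : forall (f h : nat -> T) (k l : nat),
  k + l <= N -> k + l < g ->
  (forall i, i < k -> e (f i) (f i.+1)) -> (forall i, i.+2 <= k -> f i != f i.+2) ->
  (forall i, i < l -> e (h i) (h i.+1)) -> (forall i, i.+2 <= l -> h i != h i.+2) ->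
  f 0 = h 0 -> f k = h l -> k = l /\ (forall i, i <= k -> f i = h i).
Proof.
elim: N => [|N IH] f h k l kN klg walk_f nb_f walk_h nb_h start_eq end_eq.
  have k0 : k = 0 by lia. have l0 : l = 0 by lia. subst.
  by split=> // i; rewrite leqn0 => /eqP ->.
case: k kN klg walk_f nb_f end_eq => [|k] kN klg walk_f nb_f end_eq.
  case: l kN klg walk_h nb_h end_eq => [|l] kN klg walk_h nb_h end_eq.
    by split=> // i; rewrite leqn0 => /eqP ->.
  have := closed_walk_long walk_h nb_h; rewrite -start_eq end_eq.
  by move=> /(_ erefl isT); lia.
case: l kN klg walk_h nb_h end_eq => [|l] kN klg walk_h nb_h end_eq.
  have := closed_walk_long walk_f nb_f; rewrite start_eq end_eq.
  by move=> /(_ erefl isT); lia.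
case: (eqVneq (f k) (h l)) => [prev_eq|prev_neq].
  have [kl same] : k = l /\ (forall i, i <= k -> f i = h i).
    by apply: (IH f h k l) => // *; [lia | lia | apply: walk_f | apply: nb_f
      | apply: walk_h | apply: nb_h]; lia.
  split; first by rewrite kl.
  move=> i; rewrite leq_eqVlt => /orP[/eqP ->|ik]; first by rewrite end_eq kl.
  exact: same.
pose K := k.+1 + l.+1.
pose loop j := if j <= k.+1 then f j else h (K - j).
have loop_hi : forall j, k.+1 <= j -> loop j = h (K - j).
  move=> j kj; rewrite /loop; case: ifP => // jk.
  have -> : j = k.+1 by lia.
  by rewrite end_eq; congr h; rewrite /K; lia.
have loop_lo : forall j, j <= k.+1 -> loop j = f j by move=> j jk; rewrite /loop jk.
have walk_loop : forall i, i < K -> e (loop i) (loop i.+1).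
  move=> j jK; case: (ltnP j k.+1) => jk.
    by rewrite !loop_lo //; [apply: walk_f | ]; lia.
  rewrite !loop_hi //; last by lia.
  have -> : K - j = (K - j.+1).+1 by rewrite /K; lia.
  by rewrite e_sym; apply: walk_h; rewrite /K; lia.
have nb_loop : forall i, i.+2 <= K -> loop i != loop i.+2.
  move=> j jK; case: (ltnP j.+1 k.+1) => jk.
    by rewrite !loop_lo //; [apply: nb_f | ]; lia.
  case: (ltnP j k.+1) => jk2.
    have -> : j = k by lia.
    rewrite loop_lo // loop_hi //.
    by have -> : K - k.+2 = l by rewrite /K; lia.
  rewrite !loop_hi //; last by lia.
  have -> : K - j = (K - j.+2).+2 by rewrite /K; lia.
  by rewrite eq_sym; apply: nb_h; rewrite /K; lia.
have := closed_walk_long walk_loop nb_loop.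
rewrite loop_lo // loop_hi; last by rewrite /K; lia.
by rewrite subnn start_eq => /(_ erefl isT); rewrite /K; lia.
Qed.

End Girth.

Fixpoint nonbacktracking (T : eqType) (s : seq T) : bool :=
  if s is a :: s' then (if s' is _ :: c :: _ then a != c else true) && nonbacktracking s'
  else true.

Lemma nonbacktrackingP (T : eqType) (x0 : T) (s : seq T) :
  nonbacktracking s -> forall i, i.+2 < size s -> nth x0 s i != nth x0 s i.+2.
Proof.
elim: s => [|a s IH] //= /andP[nb_a nb_s] [|i] /=; last by move=> hi; exact: IH.
by case: s IH nb_a nb_s => [|b [|c s]].
Qed.

Lemma short_paths_unique (T : finType) (e : rel T) (g : nat) :
  symmetric e -> irreflexive e -> girth_at_least e g ->
  forall u p q, path e u p -> path e u q ->
  nonbacktracking (u :: p) -> nonbacktracking (u :: q) ->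
  last u p = last u q -> size p + size q < g -> p = q.
Proof.
move=> e_sym e_irr girth_g u p q path_p path_q nb_p nb_q last_eq small.
have [size_eq same] :
    size p = size q /\ (forall i, i <= size p -> nth u (u :: p) i = nth u (u :: q) i).
  apply: (@short_walks_unique _ _ _ e_sym e_irr girth_g (size p + size q)) => //.
  - by move/(pathP u): path_p.
  - by move=> i hi; apply: nonbacktrackingP.
  - by move/(pathP u): path_q.
  - by move=> i hi; apply: nonbacktrackingP.
  - by rewrite -[size p]/((size (u :: p)).-1) -[size q]/((size (u :: q)).-1) !nth_last.
by apply: (@eq_from_nth _ u) => // i ip; have := same i.+1 ip.
Qed.

Section OpenPackings.
Variables (T : finType) (e : rel T).
Hypothesis e_sym : symmetric e.
Hypothesis e_irr : irreflexive e.
Hypothesis no_isolated : forall v, 1 <= deg e v.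
Hypothesis U_graph : in_U e.

Definition open_packingb (P : {set T}) : bool :=
  [forall u, [forall v, [forall w,
     [&& u \in P, v \in P & u != v] ==> ~~ (e u w && e v w)]]].

Lemma open_packingP (P : {set T}) : reflect (open_packing e P) (open_packingb P).
Proof.
apply: (iffP idP) => [opP u v uP vP uv w | opP].
  move: opP => /forallP/(_ u)/forallP/(_ v)/forallP/(_ w)/implyP; apply.
  by rewrite uP vP uv.
apply/forallP => u; apply/forallP => v; apply/forallP => w.
by apply/implyP => /and3P[uP vP uv]; exact: opP.
Qed.

Definition two_step_covered (S P' : {set T}) : Prop :=
  forall t u v, t \in P' -> e t u -> e u v ->
  exists s u', [/\ s \in S, e s u' & e u' v].

(* Extend S to a maximal open packing P; then
   (P :\: S) :|: P' is again an open packing, of size |P| - |S| + |P'|.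
   Since |P| >= rho^o_L = rho^o, this forces |P'| <= |S|. *)
Lemma open_packing_exchange (S P' : {set T}) :
  open_packing e S -> open_packing e P' -> two_step_covered S P' -> #|P'| <= #|S|.
Proof.
move: U_graph => [n [[_ n_max] [_ n_min]]] opS opP' covered.
have S_ok : open_packingb S && (S \subset S) by rewrite subxx andbT; apply/open_packingP.
case: (@arg_maxnP _ S (fun P => open_packingb P && (S \subset P)) (fun P => #|P|) S_ok)
  => P /andP[/open_packingP opP SP] P_max.
have maxP : maximal_open_packing e P.
  split=> // Q opQ PQ; apply/eqP; rewrite eqEcard PQ /=.
  by apply: P_max; rewrite (subset_trans SP PQ) andbT; apply/open_packingP.
have P_ge_n := n_min P maxP.
have no_common : forall u v w, u \in P :\: S -> v \in P' -> e u w -> e v w -> False.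
  move=> u v w; rewrite inE => /andP[uS uP] vP' uw vw.
  have [s [u' [sS su' u'u]]] := covered v w u vP' vw ltac:(by rewrite e_sym).
  have sP : s \in P by apply: (subsetP SP).
  case: (eqVneq s u) => [su|su]; first by rewrite su (negbTE uS) in sS.
  by have := opP s u sP uP su u'; rewrite su' e_sym u'u.
pose Q := (P :\: S) :|: P'.
have opQ : open_packing e Q.
  move=> u v; rewrite !in_setU => /orP[uP|uP'] /orP[vP|vP'] uv w;
    apply/negP => /andP[uw vw].
  - move: uP vP; rewrite !inE => /andP[_ uP] /andP[_ vP].
    by have := opP u v uP vP uv w; rewrite uw vw.
  - exact: (no_common u v w).
  - exact: (no_common v u w).
  - by have := opP' u v uP' vP' uv w; rewrite uw vw.
have disjoint_parts : (P :\: S) :&: P' = set0.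
  apply/eqP; rewrite -subset0; apply/subsetP => v; rewrite !inE.
  move=> /andP[/andP[vS vP] vP'].
  have /card_gt0P[w] := no_isolated v; rewrite inE => vw.
  by case: (no_common v v w) => //; rewrite inE vS.
have := n_max Q opQ.
rewrite /Q cardsU disjoint_parts cards0 subn0 cardsD (setIidPr SP).
have := subset_leq_card SP; lia.
Qed.

Lemma leaf_nbr_unique (l v w : T) : leaf e l -> e l v -> e l w -> w = v.
Proof.
rewrite /leaf /deg => /cards1P[x nbhd_l] lv lw.
have : v \in nbhd e l by rewrite inE.
have : w \in nbhd e l by rewrite inE.
by rewrite nbhd_l !inE => /eqP -> /eqP ->.
Qed.

(* A neighbour of v other than u, chosen canonically (v itself if none). *)
Definition next_vertex (u v : T) : T := odflt v [pick w | e v w && (w != u)].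

Lemma next_vertex_spec (u v : T) :
  ~~ leaf e v -> e v (next_vertex u v) && (next_vertex u v != u).
Proof.
move=> not_leaf; have := no_isolated v; move: not_leaf; rewrite /leaf /deg => nl d1.
have : 0 < #|nbhd e v :\ u|.
  by have := cardsD1 u (nbhd e v); case: (u \in nbhd e v) => /=; lia.
move/card_gt0P => [w]; rewrite !inE => /andP[wu vw].
rewrite /next_vertex; case: pickP => [w' //|none].
by have := none w; rewrite vw wu.
Qed.

(* In a graph of U, two distinct non-adjacent support vertices s, t cannot
   have a common neighbour x that shares no neighbour with s: otherwise the
   open packing {ls, s, lt} (ls, lt leaves at s, t) beats {x, s}. *)
Lemma support_pair_common_nbr (s t x : T) :
  Defs.support e s -> Defs.support e t -> e x s -> e x t -> s != t -> ~~ e s t ->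
  (forall c, e x c -> e s c -> False) -> False.
Proof.
move=> /existsP[ls /andP[s_ls leaf_ls]] /existsP[lt /andP[t_lt leaf_lt]].
move=> xs xt st nst no_common.
have ls_only : forall w, e ls w -> w = s.
  by move=> w; apply: leaf_nbr_unique; rewrite // e_sym.
have lt_only : forall w, e lt w -> w = t.
  by move=> w; apply: leaf_nbr_unique; rewrite // e_sym.
have ls_s : ls != s by apply/eqP => h; move: s_ls; rewrite h e_irr.
have ls_lt : ls != lt.
  apply/eqP => h; move/negP: st; apply; apply/eqP.
  by rewrite -(ls_only t) // h e_sym.
have s_lt : s != lt by apply/eqP => h; move/negP: nst; apply; rewrite h e_sym.
suff : #|[set ls; s; lt]| <= #|[set x; s]|.
  rewrite -setUA cardsU1 !cards2 !inE (negbTE ls_s) (negbTE ls_lt) s_lt /=.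
  by case: (x != s).
apply: open_packing_exchange.
- move=> u v; rewrite !inE => /orP[]/eqP-> /orP[]/eqP-> //; rewrite ?eqxx // => _ w;
    apply/negP => /andP[h1 h2]; exact: (no_common w).
- move=> u v; rewrite !inE => /orP[/orP[/eqP->|/eqP->]|/eqP->] /orP[/orP[/eqP->|/eqP->]|/eqP->];
    move=> uv w; apply/negP => /andP[h1 h2]; move: uv h1 h2; rewrite ?eqxx //;
    move=> _ h1 h2; first [ by move: h2; rewrite (ls_only w h1) e_irr
    | by move: h1; rewrite (ls_only w h2) e_irr
    | by move/negP: st; apply; apply/eqP; rewrite -(ls_only w h1) (lt_only w h2)
    | by move/negP: st; apply; apply/eqP; rewrite -(ls_only w h2) (lt_only w h1)
    | by move/negP: nst; apply; rewrite -(lt_only w h2)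
    | by move/negP: nst; apply; rewrite -(lt_only w h1) ].
- move=> t' u v; rewrite !inE => /orP[/orP[/eqP->|/eqP->]|/eqP->] t'u uv.
  + by exists x, s; split; rewrite ?inE ?eqxx // -(ls_only u t'u).
  + by exists s, u; split; rewrite ?inE ?eqxx ?orbT.
  + by exists x, t; split; rewrite ?inE ?eqxx // -(lt_only u t'u).
Qed.

End OpenPackings.

Ltac walk_check e_sym := rewrite /= ?andbT ?andTb; repeat (apply/andP; split);
  try done; try (by rewrite eq_sym); try (by rewrite e_sym).

Section DistanceThree.
Variables (T : finType) (e : rel T).
Hypothesis e_sym : symmetric e.
Hypothesis e_irr : irreflexive e.
Hypothesis girth15 : girth_at_least e 15.
Hypothesis no_isolated : forall v, 1 <= deg e v.
Hypothesis U_graph : in_U e.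

Variables (s1 a b s2 l2 : T).
Hypotheses (s1_a : e s1 a) (a_b : e a b) (b_s2 : e b s2).
Hypotheses (s1_s2 : ~~ e s1 s2) (s1_b : s1 != b) (a_s2 : a != s2).
Hypothesis support_s1 : Defs.support e s1.
Hypothesis nbrs_s1 : forall x, e s1 x -> ~~ Defs.support e x.
Hypotheses (s2_l2 : e s2 l2) (leaf_l2 : leaf e l2).

Lemma walks_from_s1_unique (p q : seq T) :
  path e s1 p -> path e s1 q ->
  nonbacktracking (s1 :: p) -> nonbacktracking (s1 :: q) ->
  last s1 p = last s1 q -> size p + size q < 15 -> p = q.
Proof. exact: short_paths_unique. Qed.

Lemma s1_no_triangle (x y : T) : e s1 x -> e x y -> y != s1 -> ~~ e s1 y.
Proof.
move=> s1x xy ys1; apply/negP => s1y.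
have : [:: y] = [:: x; y] by apply: walks_from_s1_unique; walk_check e_sym.
by move/(congr1 size).
Qed.

(* A non-backtracking walk s1, x, y, z, w of length 4 that does not start
   along the edge s1 a; its end points w are the vertices we pack. *)
Definition far_walk (x y z w : T) : bool :=
  [&& e s1 x, x != a, e x y, y != s1, e y z, z != x, e z w & w != y].

Definition far_ends : {set T} :=
  [set w | [exists x, [exists y, [exists z,
     far_walk x y z w && (w == next_vertex e y z)]]]].

Lemma far_endsP (w : T) :
  reflect (exists x y z, w = next_vertex e y z /\ far_walk x y z w) (w \in far_ends).
Proof.
rewrite inE; apply: (iffP existsP).
  by move=> [x /existsP[y /existsP[z /andP[fw /eqP wnext]]]]; exists x, y, z.
move=> [x [y [z [wnext fw]]]]; exists x; apply/existsP; exists y; apply/existsP.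
by exists z; rewrite fw wnext eqxx.
Qed.

(* Every walk s1, x, y with x != a extends to a far walk: x is not a support
   vertex, so y is not a leaf; y is not a support vertex (it would form with
   s1 a forbidden pair of supports around x), so its next vertex z is not a
   leaf either. *)
Lemma far_walk_exists (x y : T) :
  e s1 x -> x != a -> e x y -> y != s1 -> exists z, far_walk x y z (next_vertex e y z).
Proof.
move=> s1x xa xy ys1.
have y_not_leaf : ~~ leaf e y.
  apply/negP => leaf_y; move/negP: (nbrs_s1 s1x); apply.
  by apply/existsP; exists y; rewrite xy leaf_y.
have y_not_support : ~~ Defs.support e y.
  apply/negP => supp_y.
  apply: (support_pair_common_nbr e_sym e_irr no_isolated U_graph support_s1 supp_y _ xy).
  - by rewrite e_sym.
  - by rewrite eq_sym.
  - exact: s1_no_triangle s1x xy ys1.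
  move=> c xc s1c; have cs1 : c != s1 by apply/eqP => cs; rewrite cs e_irr in s1c.
  by move/negP: (s1_no_triangle s1x xc cs1).
have /andP[yz zx] := next_vertex_spec no_isolated x y_not_leaf.
set z := next_vertex e x y in yz zx *.
have z_not_leaf : ~~ leaf e z.
  by apply/negP => leaf_z; move/negP: y_not_support; apply; apply/existsP; exists z;
    rewrite yz leaf_z.
have /andP[zw wy] := next_vertex_spec no_isolated y z_not_leaf.
by exists z; rewrite /far_walk s1x xa xy ys1 yz zx zw wy.
Qed.

Section FarEnd.
Variables (x y z w : T).
Hypothesis far : far_walk x y z w.

Lemma far_end_neq_s1 : w != s1.
Proof.
move: far => /and5P[s1x xa xy ys1 /and4P[yz zx zw wy]].
apply/eqP => ws1.
have : [:: x; y; z; w] = [::]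
  by apply: walks_from_s1_unique; walk_check e_sym; rewrite /= ws1.
by [].
Qed.

Lemma far_end_s1_apart (c : T) : e w c -> e s1 c -> False.
Proof.
move: far => /and5P[s1x xa xy ys1 /and4P[yz zx zw wy]] wc s1c.
case: (eqVneq c z) => [cz|cz].
  have : [:: x; y; z] = [:: c]
    by apply: walks_from_s1_unique; walk_check e_sym; rewrite cz.
  by move/(congr1 size).
have : [:: x; y; z; w; c] = [:: c] by apply: walks_from_s1_unique; walk_check e_sym.
by move/(congr1 size).
Qed.

(* w is not adjacent to s2, hence w and l2 have no common neighbour. *)
Lemma far_end_not_nbr_s2 : ~~ e w s2.
Proof.
move: far => /and5P[s1x xa xy ys1 /and4P[yz zx zw wy]].
apply/negP => ws2.
case: (eqVneq s2 z) => [s2z|s2z].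
  have : [:: x; y; z] = [:: a; b; s2]
    by apply: walks_from_s1_unique; walk_check e_sym; rewrite s2z.
  by case=> xa'; rewrite xa' eqxx in xa.
have : [:: x; y; z; w; s2] = [:: a; b; s2]
  by apply: walks_from_s1_unique; walk_check e_sym.
by move/(congr1 size).
Qed.

Lemma far_end_neq_l2 : w != l2.
Proof.
by apply/eqP => wl2; move/negP: far_end_not_nbr_s2; apply; rewrite wl2 e_sym.
Qed.

Lemma far_end_b_apart (c : T) : e b c -> e w c -> False.
Proof.
have ws1 := far_end_neq_s1.
move: far => /and5P[s1x xa xy ys1 /and4P[yz zx zw wy]] bc wc.
case: (eqVneq c a) => [ca|ca].
  subst c; have : [:: x; y; z; w] = [:: a; w]
    by apply: walks_from_s1_unique; walk_check e_sym.
  by move/(congr1 size).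
case: (eqVneq c z) => [cz|cz].
  have : [:: x; y; z] = [:: a; b; c]
    by apply: walks_from_s1_unique; walk_check e_sym; rewrite cz.
  by case=> xa'; rewrite xa' eqxx in xa.
have : [:: x; y; z; w; c] = [:: a; b; c] by apply: walks_from_s1_unique; walk_check e_sym.
by move/(congr1 size).
Qed.

End FarEnd.

Lemma far_ends_apart (x y z x' y' z' c : T) :
  let w := next_vertex e y z in let w' := next_vertex e y' z' in
  far_walk x y z w -> far_walk x' y' z' w' -> w != w' -> e w c -> e w' c -> False.
Proof.
move=> w w' /and5P[s1x xa xy ys1 /and4P[yz zx zw wy]].
move=> /and5P[s1x' xa' xy' ys1' /and4P[yz' zx' zw' wy']] ww' wc w'c.
case: (eqVneq c z) => [cz|cz]; case: (eqVneq c z') => [cz'|cz'].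
- have : [:: x; y; z] = [:: x'; y'; z']
    by apply: walks_from_s1_unique; walk_check e_sym; rewrite -cz -cz'.
  by case=> _ yy' zz'; rewrite /w /w' yy' zz' eqxx in ww'.
- have : [:: x; y; z] = [:: x'; y'; z'; w'; c]
    by apply: walks_from_s1_unique; walk_check e_sym; rewrite -cz.
  by move/(congr1 size).
- have : [:: x; y; z; w; c] = [:: x'; y'; z']
    by apply: walks_from_s1_unique; walk_check e_sym; rewrite -cz'.
  by move/(congr1 size).
- have : [:: x; y; z; w; c] = [:: x'; y'; z'; w'; c]
    by apply: walks_from_s1_unique; walk_check e_sym.
  by case=> _ _ _ eww'; rewrite eww' eqxx in ww'.
Qed.

Definition near_packing : {set T} := b |: far_ends.
Definition far_packing : {set T} := s1 |: (l2 |: far_ends).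

Lemma near_packing_open : open_packing e near_packing.
Proof.
move=> u v; rewrite !in_setU1 => /orP[/eqP->|/far_endsP[x [y [z [-> fw]]]]]
  /orP[/eqP->|/far_endsP[x' [y' [z' [-> fw']]]]] uv c; apply/negP => /andP[uc vc].
- by rewrite eqxx in uv.
- exact: (far_end_b_apart fw' uc vc).
- exact: (far_end_b_apart fw vc uc).
- exact: (far_ends_apart fw fw' uv uc vc).
Qed.

Lemma l2_only_nbr (c : T) : e l2 c -> c = s2.
Proof. by apply: leaf_nbr_unique; rewrite // e_sym. Qed.

Lemma far_packing_open : open_packing e far_packing.
Proof.
move=> u v; rewrite !in_setU1.
move=> /orP[/eqP->|/orP[/eqP->|/far_endsP[x [y [z [-> fw]]]]]]
  /orP[/eqP->|/orP[/eqP->|/far_endsP[x' [y' [z' [-> fw']]]]]] uv c;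
  apply/negP => /andP[uc vc]; rewrite ?eqxx // in uv.
- by move: s1_s2; rewrite -(l2_only_nbr vc) uc.
- exact: (far_end_s1_apart fw' vc uc).
- by move: s1_s2; rewrite -(l2_only_nbr uc) vc.
- by move/negP: (far_end_not_nbr_s2 fw'); apply; rewrite -(l2_only_nbr uc).
- exact: (far_end_s1_apart fw uc vc).
- by move/negP: (far_end_not_nbr_s2 fw); apply; rewrite -(l2_only_nbr vc).
- exact: (far_ends_apart fw fw' uv uc vc).
Qed.

(* Walks of length 2 from s1 are covered by b (through a) or by a far end;
   those from l2 end at a neighbour of s2, covered by b; those from a far end
   are covered by the far end itself. *)
Lemma far_packing_covered : two_step_covered e near_packing far_packing.
Proof.
move=> t u v; rewrite /near_packing /far_packing !in_setU1 => /orP[/eqP->|/orP[/eqP->|tW]] tu uv.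
- case: (eqVneq u a) => [ua|ua].
    by exists b, a; split; [rewrite in_setU1 eqxx | rewrite e_sym | rewrite -ua].
  case: (eqVneq v s1) => [vs1|vs1].
    by exists b, a; split; [rewrite in_setU1 eqxx | rewrite e_sym | rewrite vs1 e_sym].
  have [z fw] := far_walk_exists tu ua uv vs1.
  have [_ _ _ _ /and4P[vz _ zw _]] := and5P fw.
  exists (next_vertex e v z), z; split; rewrite 1?e_sym //.
  by rewrite in_setU1; apply/orP; right; apply/far_endsP; exists u, v, z.
- exists b, s2; split; rewrite ?in_setU1 ?eqxx //.
  by rewrite (l2_only_nbr tu) in uv.
- by exists t, u; split; rewrite // in_setU1 tW orbT.
Qed.

Lemma near_packing_smaller : #|near_packing| < #|far_packing|.
Proof.
have s1_notin : s1 \notin far_ends.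
  by apply/negP => /far_endsP[x [y [z [_ fw]]]]; move: (far_end_neq_s1 fw); rewrite eqxx.
have l2_notin : l2 \notin far_ends.
  by apply/negP => /far_endsP[x [y [z [_ fw]]]]; move: (far_end_neq_l2 fw); rewrite eqxx.
have s1_l2 : s1 != l2 by apply/eqP => s1l2; move: s1_s2; rewrite s1l2 e_sym s2_l2.
rewrite /near_packing /far_packing cardsU1 [X in _ < X]cardsU1 cardsU1.
rewrite in_setU1 (negbTE s1_l2) (negbTE s1_notin) l2_notin /=.
by case: (b \in far_ends).
Qed.

Lemma distance_three_impossible : False.
Proof.
have := open_packing_exchange e_sym no_isolated U_graph
  near_packing_open far_packing_open far_packing_covered.
by rewrite leqNgt near_packing_smaller.
Qed.

End DistanceThree.

Theorem claim1 (T : finType) (e : rel T) (s1 s2 : T) :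
  simple_graph e ->
  connected_graph e ->
  min_degree_is e 1 ->
  girth_at_least e 15 ->
  in_U e ->
  single_star_support e s1 ->
  single_star_support e s2 ->
  ~ dist_is e s1 s2 3.
Proof.
move=> [e_sym e_irr] _ [_ no_isolated] girth15 U_graph.
move=> /andP[support_s1 /forallP nbrs_s1] /andP[/existsP[l2 /andP[s2_l2 leaf_l2]] _].
move=> [[p [path_p last_p size_p]] shortest].
case: p path_p last_p size_p => [|a [|b [|c [|]]]] //= path_p last_c _; subst c.
move: path_p => /and4P[s1_a a_b b_s2 _].
have s1_s2 : ~~ e s1 s2.
  by apply/negP => s1s2; apply: (shortest 1 erefl); exists [:: s2]; rewrite /= s1s2.
have s1_b : s1 != b by apply/eqP => s1b; rewrite s1b b_s2 in s1_s2.
have a_s2 : a != s2 by apply/eqP => as2; rewrite -as2 s1_a in s1_s2.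
apply: (distance_three_impossible e_sym e_irr girth15 no_isolated U_graph
  s1_a a_b b_s2 s1_s2 s1_b a_s2 support_s1 _ s2_l2 leaf_l2).
by move=> x /(implyP (nbrs_s1 x)).
Qed.
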